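(* Let $A=(a_{ij})_{i,j\in I}$ be a Borcherds–Cartan matrix and $\tilde A$ the associated generalized Cartan matrix. If $A$ is symmetrizable, then so is $\tilde A$.
   Context: $I$ is a countable set; $A$ is a Borcherds–Cartan matrix: $a_{ii}=2$ or $a_{ii}\in\mathbb Z_{\le0}$; $a_{ij}\in\mathbb Z_{\le0}$ for $i\neq j$; $a_{ij}=0\iff a_{ji}=0$ for $i\ne j$. $I^{re}=\{i:a_{ii}=2\}$, $I^{im}=I\setminus I^{re}$. A matrix $M$ indexed by a set $J$ is symmetrizable if there is a diagonal matrix $D=\mathrm{diag}(d_j)_{j\in J}$ with $d_j\in\mathbb Z_{>0}$ such that $DM$ is symmetric. $\tilde I=\{(i,1)\}_{i\in I^{re}}\sqcup\{(i,m)\}_{i\in I^{im},m\in\mathbb Z_{\ge1}}$ and $\tilde A=(\tilde a_{(i,m),(j,n)})_{(i,m),(j,n)\in\tilde I}$ with $\tilde a_{(i,m),(i,m)}=2$ and $\tilde a_{(i,m),(j,n)}=a_{ij}$ for $(i,m)\neq(j,n)$. *)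

From mathcomp Require Import all_boot all_order all_algebra.
Set Implicit Arguments. Unset Strict Implicit. Unset Printing Implicit Defensive.
Import GRing.Theory Num.Theory.
Local Open Scope ring_scope.

Definition borcherds_cartan (I : Type) (A : I -> I -> int) : Prop :=
  (forall i, A i i = 2 \/ A i i <= 0) /\
  (forall i j, i <> j -> A i j <= 0) /\
  (forall i j, i <> j -> (A i j = 0 <-> A j i = 0)).

Definition symmetrizable (J : Type) (M : J -> J -> int) : Prop :=
  exists d : J -> int, (forall j, 0 < d j) /\
    (forall i j, d i * M i j = d j * M j i).

(* Index set I~ = {(i,1) : i in I^re} ⊔ {(i,m) : i in I^im, m >= 1},
   realized as pairs (i, m) with m >= 1 and (i in I^re -> m = 1). *)
Definition tilde_idx_pred (I : Type) (A : I -> I -> int) (p : I * nat) : bool :=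
  (0 < p.2)%N && ((A p.1 p.1 == 2) ==> (p.2 == 1)%N).

Definition tildeI (I : countType) (A : I -> I -> int) : Type :=
  {p : I * nat | tilde_idx_pred A p}.

Definition tildeA (I : countType) (A : I -> I -> int)
    (p q : tildeI A) : int :=
  if (val p == val q) then 2 else A (val p).1 (val q).1.

From mathcomp Require Import all_boot all_order all_algebra.

(* The diagonal of a symmetrizing matrix D for A pulls back along (i, m) |-> i:
   off the diagonal A~ copies the entries of A, and the diagonal imposes no
   condition. *)
Lemma symmetrizable_pullback (I : Type) (J : eqType) (A : I -> I -> int)
    (M : J -> J -> int) (f : J -> I) :
  (forall p q, p <> q -> M p q = A (f p) (f q)) ->
  symmetrizable A -> symmetrizable M.
Proof.
move=> M_offdiag [d [d_gt0 d_sym]].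
exists (fun p => d (f p)); split=> [p|p q]; first exact: d_gt0.
have [-> //|/eqP neq_pq] := eqVneq p q.
by rewrite !M_offdiag //; apply: nesym.
Qed.

Lemma tildeA_offdiag (I : countType) (A : I -> I -> int) (p q : tildeI A) :
  p <> q -> tildeA p q = A (val p).1 (val q).1.
Proof. by move=> neq_pq; rewrite /tildeA (introF eqP) // => /val_inj. Qed.

Theorem lemma4p1p1 (I : countType) (A : I -> I -> int) :
  borcherds_cartan A -> symmetrizable A -> symmetrizable (@tildeA I A).
Proof.
by move=> _; apply: symmetrizable_pullback; apply: tildeA_offdiag.
Qed.
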